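(* Let $\alpha\in(0,1)$, $a_0,a_1\in\mathbb{C}$, and let $\lambda_1,\lambda_2$ be the roots of $\lambda^2+a_1\lambda+a_0$. Consider ${}^LD^{2\circ\alpha}x+a_1{}^LD^\alpha x+a_0x=0$ with $x(0)=x_0$, ${}^LD^\alpha x(0)=x_{0,1}$, and let $\mathcal{S}$ be its solution space (without initial conditions). If $\lambda_1\neq\lambda_2$, the solution on $[0,\infty)$ is $$x(t)=\frac{x_{0,1}-\lambda_2x_0}{\lambda_1-\lambda_2}\mathcal{E}_\alpha(\lambda_1t)+\frac{\lambda_1x_0-x_{0,1}}{\lambda_1-\lambda_2}\mathcal{E}_\alpha(\lambda_2t),$$ and $\{\mathcal{E}_\alpha(\lambda_1t),\mathcal{E}_\alpha(\lambda_2t)\}$ is a basis of $\mathcal{S}$. If $\lambda_1=\lambda_2=\lambda$, the solution on $[0,\infty)$ is $x(t)=x_0\mathcal{E}_\alpha(\lambda t)+(x_{0,1}-\lambda x_0)\,t\,\mathcal{E}_\alpha'(\lambda t)$, and $\{\mathcal{E}_\alpha(\lambda t),t\mathcal{E}_\alpha'(\lambda t)\}$ is a basis of $\mathcal{S}$.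
   Context: $\mathcal{E}_\alpha(s)=\sum_{n=0}^\infty\frac{s^n}{\Gamma(2-\alpha)^n\prod_{j=1}^n\frac{\Gamma(j+1)}{\Gamma(j+1-\alpha)}}$ (entire), $\mathcal{E}_\alpha'$ its ordinary derivative. Solutions are taken among functions on $[0,\infty)$ given by everywhere convergent power series, with the equation holding for all $t\ge0$. ${}^LD^\alpha x(t)=\frac{\Gamma(2-\alpha)}{t^{1-\alpha}}\cdot\frac{1}{\Gamma(1-\alpha)}\int_0^t (t-\tau)^{-\alpha}x'(\tau)d\tau$ for $t>0$; on power series it acts termwise: ${}^LD^\alpha\sum_nx_nt^n=\sum_nx_{n+1}\frac{\Gamma(n+2)\Gamma(2-\alpha)}{\Gamma(n+2-\alpha)}t^n$, which also defines the value at $t=0$. ${}^LD^{2\circ\alpha}={}^LD^\alpha\circ{}^LD^\alpha$. *)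

From Stdlib Require Import Reals.
From Coquelicot Require Import Coquelicot.

Open Scope R_scope.

Definition Gamma (s : R) : R :=
  RInt_gen (fun t => Rpower t (s - 1) * exp (- t)) (at_right 0) (Rbar_locally p_infty).

Fixpoint prodG (a : R) (n : nat) : R :=
  match n with
  | O => 1
  | S m => prodG a m * (Gamma (INR m + 2) / Gamma (INR m + 2 - a))
  end.

Definition Ecoef (a : R) (n : nat) : R :=
  / (Gamma (2 - a) ^ n * prodG a n).

Open Scope C_scope.

Definition CSeries (u : nat -> C) : C :=
  (Series (fun n => Re (u n)), Series (fun n => Im (u n))).

Definition CPSeries (c : nat -> C) (z : C) : C :=
  CSeries (fun n => c n * z ^ n).

Definition entire_coef (c : nat -> C) : Prop :=
  forall z : C, @ex_series C_AbsRing C_NormedModule (fun n => c n * z ^ n).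

Definition Ealpha (a : R) (s : C) : C := CPSeries (fun n => RtoC (Ecoef a n)) s.
Definition Ealpha' (a : R) (s : C) : C :=
  CPSeries (fun n => RtoC (INR (S n) * Ecoef a (S n))) s.

(* Termwise action of ^L D^alpha on the coefficients of a power series:
   ^L D^alpha sum_n x_n t^n = sum_n x_{n+1} Gamma(n+2)Gamma(2-a)/Gamma(n+2-a) t^n *)
Definition LDcoef (a : R) (c : nat -> C) (n : nat) : C :=
  c (S n) * RtoC (Gamma (INR n + 2) * Gamma (2 - a) / Gamma (INR n + 2 - a)).

Definition represents (c : nat -> C) (x : R -> C) : Prop :=
  entire_coef c /\ forall t : R, (0 <= t)%R -> x t = CPSeries c (RtoC t).

Definition solves_eq (a : R) (a0 a1 : C) (c : nat -> C) : Prop :=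
  forall t : R, (0 <= t)%R ->
    CPSeries (LDcoef a (LDcoef a c)) (RtoC t)
    + a1 * CPSeries (LDcoef a c) (RtoC t)
    + a0 * CPSeries c (RtoC t) = 0.

Definition in_sol_space (a : R) (a0 a1 : C) (x : R -> C) : Prop :=
  exists c, represents c x /\ solves_eq a a0 a1 c.

Definition solves_ivp (a : R) (a0 a1 x0 x01 : C) (x : R -> C) : Prop :=
  exists c, represents c x /\ solves_eq a a0 a1 c /\
    x 0%R = x0 /\ CPSeries (LDcoef a c) (RtoC 0) = x01.

Definition sol_basis (a : R) (a0 a1 : C) (f1 f2 : R -> C) : Prop :=
  in_sol_space a a0 a1 f1 /\ in_sol_space a a0 a1 f2 /\
  (forall k1 k2 : C, (forall t : R, (0 <= t)%R -> k1 * f1 t + k2 * f2 t = 0) ->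
      k1 = 0 /\ k2 = 0) /\
  (forall x, in_sol_space a a0 a1 x ->
      exists k1 k2 : C, forall t : R, (0 <= t)%R -> x t = k1 * f1 t + k2 * f2 t).

(* On a power series [sum_n c_n t^n], [^L D^alpha] acts as the weighted shift
   [c_n |-> g_n c_(n+1)] with [g_n = Gamma(n+2) Gamma(2-alpha) / Gamma(n+2-alpha)].  By the
   identity theorem for power series on [0, +oo), the equation is therefore equivalent to the
   recurrence [g_(n+1) g_n c_(n+2) + a1 g_n c_(n+1) + a0 c_n = 0]: a solution is determined by
   [c_0 = x(0)] and [g_0 c_1 = ^L D^alpha x(0)], and the solution space is two-dimensional.
   The coefficients [e_n] of [E_alpha] satisfy [g_n e_(n+1) = e_n], so [t |-> E_alpha(l t)] is
   an eigenvector of [^L D^alpha] with eigenvalue [l], and [t |-> t E_alpha'(l t)] a generalised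
   one ([^L D^alpha] maps it to [E_alpha(l t) + l t E_alpha'(l t)]); hence both solve the
   equation when [l] is a root, a double one in the second case, of [l^2 + a1 l + a0].
   Convergence rests on the bounds [n!/2 <= Gamma(n+2-alpha) = o((n+1)!)]: [g_n] grows at most
   linearly, so [^L D^alpha] preserves entire series, and [g_n -> +oo], so [E_alpha] is entire. *)

From Stdlib Require Import Reals Lra Lia Arith.
From Coquelicot Require Import Coquelicot.
Open Scope R_scope.

(** * Power series *)

Lemma ex_pseries_R (b : nat -> R) (x : R) :
  ex_pseries b x <-> ex_series (fun n => b n * x ^ n).
Proof.
  split; apply ex_series_ext; intro n; rewrite <- (pow_n_pow x n); apply Rmult_comm.
Qed.

Lemma CV_radius_entire (b : nat -> R) : (forall x, ex_pseries b x) -> CV_radius b = p_infty.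
Proof.
  intros Hb.
  assert (Hbd : forall r, exists M, forall n, Rabs (b n * r ^ n) <= M).
  { intros r. destruct (filterlim_bounded (fun n => b n * r ^ n)) as [M HM].
    - exists 0. apply ex_series_lim_0, ex_pseries_R, Hb.
    - exists M. exact HM. }
  destruct (CV_radius_bounded b) as [Hub _].
  destruct (CV_radius b) as [r | |] eqn:E; auto; exfalso.
  - specialize (Hub (r + 1) (Hbd (r + 1))). simpl in Hub. lra.
  - exact (Hub 0 (Hbd 0)).
Qed.

Lemma continuity_pt_eq0_right (f : R -> R) :
  continuity_pt f 0 -> (forall t, 0 < t -> f t = 0) -> f 0 = 0.
Proof.
  intros Hc Hz. destruct (Req_dec (f 0) 0) as [|Hne]; auto. exfalso.
  destruct (Hc (Rabs (f 0)) (Rabs_pos_lt _ Hne)) as [d [Hd Hy]].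
  specialize (Hy (d / 2)). simpl in Hy. unfold R_dist in Hy.
  rewrite Hz, Rminus_0_l, Rabs_Ropp in Hy by lra.
  apply (Rlt_irrefl (Rabs (f 0))), Hy. split; [split; [exact I | lra] |].
  rewrite Rminus_0_r, Rabs_pos_eq; lra.
Qed.

Lemma PSeries_coef_eq0 n (b : nat -> R) : (forall x, ex_pseries b x) ->
  (forall t, 0 <= t -> PSeries b t = 0) -> b n = 0.
Proof.
  revert b; induction n as [|n IH]; intros b Hb Hz.
  - rewrite <- (PSeries_0 b). apply Hz, Rle_refl.
  - change (b (S n)) with (PS_decr_1 b n).
    assert (Hrad : CV_radius (PS_decr_1 b) = p_infty)
      by (rewrite CV_radius_decr_1; apply CV_radius_entire, Hb).
    apply IH; [intro x; apply CV_radius_inside; rewrite Hrad; exact I |].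
    assert (Hb0 : b 0%nat = 0) by (rewrite <- (PSeries_0 b); apply Hz, Rle_refl).
    assert (Hpos : forall t, 0 < t -> PSeries (PS_decr_1 b) t = 0).
    { intros t Ht. pose proof (PSeries_decr_1 b t (Hb t)) as E.
      rewrite Hz, Hb0, Rplus_0_l in E by lra.
      destruct (Rmult_integral _ _ (eq_sym E)); lra. }
    intros t Ht. destruct (Req_dec t 0) as [-> | Ht0]; [| apply Hpos; lra].
    apply continuity_pt_eq0_right; auto.
    apply PSeries_continuity. rewrite Hrad. exact I.
Qed.

Lemma ex_series_ratio_half (u : nat -> R) : (forall n, 0 <= u n) ->
  (exists N, forall n, (N <= n)%nat -> u (S n) <= u n / 2) -> ex_series u.
Proof.
  intros Hpos [N HN]. apply (ex_series_incr_n u N).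
  assert (Hgeom : forall k, u (N + k)%nat <= u N * (/ 2) ^ k).
  { induction k as [|k IH]; [rewrite Nat.add_0_r; simpl; lra |].
    replace (N + S k)%nat with (S (N + k)) by lia. specialize (HN (N + k)%nat ltac:(lia)).
    simpl. lra. }
  apply (@ex_series_le R_AbsRing R_CompleteNormedModule _ (fun k => u N * (/ 2) ^ k)).
  - intros k. unfold norm; simpl; unfold abs; simpl. rewrite Rabs_pos_eq by apply Hpos. apply Hgeom.
  - apply (@ex_series_scal R_AbsRing R_NormedModule (u N) (fun k => (/ 2) ^ k)).
    apply ex_series_geom. rewrite Rabs_pos_eq; lra.
Qed.

Lemma CPSeries_RtoC (c : nat -> C) (t : R) :
  CPSeries c (RtoC t) = (PSeries (fun n => Re (c n)) t, PSeries (fun n => Im (c n)) t).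
Proof.
  unfold CPSeries, CSeries, PSeries. f_equal; apply Series_ext; intro n;
  rewrite <- RtoC_pow; destruct (c n) as [u v]; unfold Re, Im, Cmult, RtoC; simpl; ring.
Qed.

Lemma ex_series_Re_Im (u : nat -> C) : @ex_series C_AbsRing C_NormedModule u ->
  ex_series (fun n => Re (u n)) /\ ex_series (fun n => Im (u n)).
Proof.
  intros [l Hl].
  assert (Hsum : forall n, @sum_n C_AbelianMonoid u n
                   = (sum_n (fun k => Re (u k)) n, sum_n (fun k => Im (u k)) n)).
  { induction n as [|n IH]; [rewrite !sum_O | rewrite !sum_Sn, IH];
    [destruct (u 0%nat) | destruct (u (S n))]; reflexivity. }
  split; [exists (Re l) | exists (Im l)]; unfold is_series;
  [ apply filterlim_ext with (fun n => Re (@sum_n C_AbelianMonoid u n))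
  | apply filterlim_ext with (fun n => Im (@sum_n C_AbelianMonoid u n)) ];
  try (intro n; rewrite Hsum; reflexivity);
  (eapply filterlim_comp; [apply Hl | intros P [eps HP]; exists eps; intros y Hy; apply HP, Hy]).
Qed.

Lemma entire_coef_Re_Im (c : nat -> C) : entire_coef c ->
  forall x, ex_pseries (fun n => Re (c n)) x /\ ex_pseries (fun n => Im (c n)) x.
Proof.
  intros Hc x. destruct (ex_series_Re_Im _ (Hc (RtoC x))) as [Hre Him].
  rewrite !ex_pseries_R.
  split; [revert Hre | revert Him]; apply ex_series_ext; intro n;
  rewrite <- RtoC_pow; destruct (c n) as [u v]; unfold Re, Im, Cmult, RtoC; simpl; ring.
Qed.

Lemma CPSeries_coef_eq0 (c : nat -> C) : entire_coef c ->
  (forall t, 0 <= t -> CPSeries c (RtoC t) = 0%C) -> forall n, c n = 0%C.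
Proof.
  intros Hc Hz n.
  assert (Hre : Re (c n) = 0).
  { apply (PSeries_coef_eq0 n (fun k => Re (c k))); [intro x; apply (entire_coef_Re_Im c Hc) |].
    intros t Ht. specialize (Hz t Ht). rewrite CPSeries_RtoC in Hz. now injection Hz. }
  assert (Him : Im (c n) = 0).
  { apply (PSeries_coef_eq0 n (fun k => Im (c k))); [intro x; apply (entire_coef_Re_Im c Hc) |].
    intros t Ht. specialize (Hz t Ht). rewrite CPSeries_RtoC in Hz. now injection Hz. }
  destruct (c n) as [u v]; simpl in *; subst; reflexivity.
Qed.

Lemma ex_series_C_bounded (u : nat -> C) : @ex_series C_AbsRing C_NormedModule u ->
  exists M, forall n, Cmod (u n) <= M.
Proof.
  intros Hu. destruct (ex_series_Re_Im u Hu) as [Hre Him].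
  destruct (filterlim_bounded _ (ex_intro _ 0 (ex_series_lim_0 _ Hre))) as [M1 H1].
  destruct (filterlim_bounded _ (ex_intro _ 0 (ex_series_lim_0 _ Him))) as [M2 H2].
  exists (sqrt 2 * Rmax M1 M2). intro n.
  eapply Rle_trans; [apply Cmod_2Rmax |].
  apply Rmult_le_compat_l; [apply sqrt_pos |].
  apply Rmax_lub; [eapply Rle_trans; [apply H1 | apply Rmax_l]
                  | eapply Rle_trans; [apply H2 | apply Rmax_r]].
Qed.

Lemma entire_coef_plus (c d : nat -> C) : entire_coef c -> entire_coef d ->
  entire_coef (fun n => (c n + d n)%C).
Proof.
  intros Hc Hd z. eapply ex_series_ext; [| apply (ex_series_plus _ _ (Hc z) (Hd z))].
  intro n. symmetry. apply Cmult_plus_distr_r.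
Qed.

Lemma entire_coef_scal (k : C) (c : nat -> C) : entire_coef c -> entire_coef (fun n => (k * c n)%C).
Proof.
  intros Hc z. eapply ex_series_ext; [| apply (ex_series_scal k _ (Hc z))].
  intro n. change (k * (c n * z ^ n) = k * c n * z ^ n)%C. apply Cmult_assoc.
Qed.

Lemma entire_coef_dominated (c : nat -> C) (b : nat -> R) (M : R) :
  (forall rho, 0 <= rho -> ex_series (fun n => b n * rho ^ n)) -> 0 <= M ->
  (forall n, Cmod (c n) <= b n * M ^ n) -> entire_coef c.
Proof.
  intros Hb HM Hc z.
  apply (@ex_series_le C_AbsRing C_CompleteNormedModule _ (fun n => b n * (M * Cmod z) ^ n));
    [| apply Hb, Rmult_le_pos; [exact HM | apply Cmod_ge_0]].
  intro n. change (norm (c n * z ^ n)%C) with (Cmod (c n * z ^ n)).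
  rewrite Cmod_mult, Cmod_pow, Rpow_mult_distr, <- Rmult_assoc.
  apply Rmult_le_compat_r; [apply pow_le, Cmod_ge_0 | apply Hc].
Qed.

Lemma CPSeries_ext (c d : nat -> C) z : (forall n, c n = d n) -> CPSeries c z = CPSeries d z.
Proof.
  intros E. unfold CPSeries, CSeries. f_equal; apply Series_ext; intro n; rewrite E; reflexivity.
Qed.

Lemma CPSeries_plus (c d : nat -> C) t : entire_coef c -> entire_coef d ->
  CPSeries (fun n => (c n + d n)%C) (RtoC t) = (CPSeries c (RtoC t) + CPSeries d (RtoC t))%C.
Proof.
  intros Hc Hd. rewrite !CPSeries_RtoC. unfold Cplus; simpl.
  destruct (entire_coef_Re_Im c Hc t), (entire_coef_Re_Im d Hd t).
  f_equal; rewrite <- PSeries_plus by assumption; apply PSeries_ext; reflexivity.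
Qed.

Lemma CPSeries_scal (k : C) (c : nat -> C) t : entire_coef c ->
  CPSeries (fun n => (k * c n)%C) (RtoC t) = (k * CPSeries c (RtoC t))%C.
Proof.
  intros Hc. rewrite !CPSeries_RtoC. destruct k as [kr ki]. unfold Cmult; simpl.
  destruct (entire_coef_Re_Im c Hc t) as [Hre Him].
  assert (Hs : forall k (b : nat -> R), ex_pseries b t -> ex_pseries (PS_scal k b) t)
    by (intros; apply ex_pseries_scal; [apply Rmult_comm | assumption]).
  f_equal.
  - rewrite <- !PSeries_scal, <- PSeries_minus by auto.
    apply PSeries_ext. intro n. unfold PS_minus, PS_scal, PS_opp, PS_plus.
    destruct (c n); simpl. unfold scal; simpl; unfold mult, minus, plus, opp; simpl. ring.
  - rewrite <- !PSeries_scal, <- PSeries_plus by auto.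
    apply PSeries_ext. intro n. unfold PS_scal, PS_plus.
    destruct (c n); simpl. unfold scal; simpl; unfold mult, plus; simpl. ring.
Qed.

Lemma CPSeries_zero z : CPSeries (fun _ => 0%C) z = 0%C.
Proof.
  assert (Z : forall u : nat -> R, (forall n, u n = 0) -> Series u = 0).
  { intros u Hu. rewrite (Series_ext u (fun n => 0 * u n)) by (intro; rewrite Hu; ring).
    rewrite Series_scal_l. ring. }
  unfold CPSeries, CSeries. rewrite !Z by (intro; simpl; ring). reflexivity.
Qed.

Lemma CPSeries_at0 (c : nat -> C) : CPSeries c (RtoC 0) = c 0%nat.
Proof. rewrite CPSeries_RtoC, !PSeries_0. destruct (c 0%nat); reflexivity. Qed.

Lemma CPSeries_scale (c : nat -> C) (l z : C) :
  CPSeries c (l * z) = CPSeries (fun n => (c n * l ^ n)%C) z.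
Proof.
  unfold CPSeries, CSeries.
  f_equal; apply Series_ext; intro n; rewrite Cpow_mult_l, Cmult_assoc; reflexivity.
Qed.

Lemma CPSeries_shift (d : nat -> C) (t : R) : entire_coef d -> d 0%nat = 0%C ->
  CPSeries d (RtoC t) = (RtoC t * CPSeries (fun n => d (S n)) (RtoC t))%C.
Proof.
  intros Hd H0. rewrite !CPSeries_RtoC. destruct (entire_coef_Re_Im d Hd t).
  rewrite (PSeries_decr_1 (fun n => Re (d n))), (PSeries_decr_1 (fun n => Im (d n))) by assumption.
  rewrite H0. unfold PS_decr_1, RtoC, Cmult; simpl. f_equal; ring.
Qed.

Lemma entire_coef_lin (k1 k2 : C) (c d : nat -> C) : entire_coef c -> entire_coef d ->
  entire_coef (fun n => (k1 * c n + k2 * d n)%C).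
Proof. intros. apply entire_coef_plus; apply entire_coef_scal; assumption. Qed.

Lemma CPSeries_lin (k1 k2 : C) (c d : nat -> C) t : entire_coef c -> entire_coef d ->
  CPSeries (fun n => (k1 * c n + k2 * d n)%C) (RtoC t)
  = (k1 * CPSeries c (RtoC t) + k2 * CPSeries d (RtoC t))%C.
Proof.
  intros Hc Hd. rewrite CPSeries_plus, !CPSeries_scal; auto using entire_coef_scal.
Qed.

(** * Improper integrals on (0, +oo) *)

Lemma exp_ge_pow_div_fact (x : R) (n : nat) : 0 <= x -> x ^ n / INR (fact n) <= exp x.
Proof.
  intros Hx. eapply Rle_trans; [| apply (exp_ge_taylor x n Hx)].
  destruct n as [|n]; [simpl; lra |].
  rewrite tech5. assert (0 <= sum_f_R0 (fun k => x ^ k / INR (fact k)) n); [| lra].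
  apply cond_pos_sum. intro k. apply Rcomplements.Rdiv_le_0_compat;
    [apply pow_le, Hx | apply lt_0_INR, lt_O_fact].
Qed.

Lemma is_lim_pow_mult_exp_opp (k : nat) : is_lim (fun t => t ^ k * exp (- t)) p_infty 0.
Proof.
  apply is_lim_spec. intros eps. simpl.
  set (K := INR (fact (S k))). assert (HK : 0 < K) by apply lt_0_INR, lt_O_fact.
  pose proof (cond_pos eps) as Heps.
  exists (K / eps). intros t Ht.
  assert (HKt : K < eps * t).
  { apply (Rmult_lt_compat_r eps) in Ht; [| exact Heps]. unfold Rdiv in Ht.
    rewrite Rmult_assoc, Rinv_l, Rmult_1_r in Ht by lra. lra. }
  assert (Ht0 : 0 < t) by nra.
  assert (Hpow : t * t ^ k <= K * exp t).
  { pose proof (exp_ge_pow_div_fact t (S k) (Rlt_le _ _ Ht0)) as Hexp.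
    fold K in Hexp. simpl in Hexp. unfold Rdiv in Hexp.
    apply (Rmult_le_compat_r K) in Hexp; [| lra].
    rewrite Rmult_assoc, Rinv_l, Rmult_1_r in Hexp by lra. lra. }
  pose proof (exp_pos t). pose proof (pow_lt t k Ht0).
  rewrite Rminus_0_r, exp_Ropp, Rabs_pos_eq
    by (apply Rmult_le_pos; [lra | left; apply Rinv_0_lt_compat; lra]).
  apply (Rmult_lt_reg_r (exp t)); [lra |].
  rewrite Rmult_assoc, Rinv_l, Rmult_1_r by lra. nra.
Qed.

(* [powexp_primitive k t = - k! e^(-t) sum_(j <= k) t^j / j!] *)
Fixpoint powexp_primitive (k : nat) (t : R) : R :=
  match k with
  | O => - exp (- t)
  | S m => - t ^ S m * exp (- t) + INR (S m) * powexp_primitive m t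
  end.

Lemma is_derive_powexp_primitive k t : is_derive (powexp_primitive k) t (t ^ k * exp (- t)).
Proof.
  induction k as [|k IH]; simpl powexp_primitive.
  - auto_derive; [exact I | ring].
  - assert (H1 : is_derive (fun t => - t ^ S k * exp (- t)) t
                   (- (INR (S k) * t ^ k) * exp (- t) + t ^ S k * exp (- t)))
      by (auto_derive; [exact I | simpl; ring]).
    pose proof (is_derive_plus _ _ _ _ _ H1 (is_derive_scal _ t (INR (S k)) _ IH)) as H.
    replace (t ^ S k * exp (- t))
      with (plus (- (INR (S k) * t ^ k) * exp (- t) + t ^ S k * exp (- t))
                 (scal (INR (S k)) (t ^ k * exp (- t))))
      by (unfold plus, scal; simpl; unfold mult; simpl; ring).
    exact H.
Qed.

Lemma powexp_primitive_0 k : powexp_primitive k 0 = - INR (fact k).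
Proof.
  induction k as [|k IH]; simpl powexp_primitive.
  - rewrite Ropp_0, exp_0. reflexivity.
  - rewrite IH, fact_simpl, mult_INR. simpl. ring.
Qed.

Lemma is_lim_powexp_primitive k : is_lim (powexp_primitive k) p_infty 0.
Proof.
  induction k as [|k IH]; simpl powexp_primitive.
  - apply is_lim_ext with (fun t => - (t ^ 0 * exp (- t))); [intro; simpl; ring |].
    replace (Finite 0) with (Rbar_opp 0) by (simpl; f_equal; ring).
    apply is_lim_opp, is_lim_pow_mult_exp_opp.
  - apply is_lim_ext with (fun t => - (t ^ S k * exp (- t)) + INR (S k) * powexp_primitive k t);
      [intro; simpl; ring |].
    eapply is_lim_plus; [apply is_lim_opp, is_lim_pow_mult_exp_opp | apply is_lim_scal_l, IH |].
    unfold is_Rbar_plus; simpl. do 2 f_equal. ring.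
Qed.

Lemma at_right_0_lt_1 : at_right 0 (fun a => 0 < a < 1).
Proof.
  exists (mkposreal 1 Rlt_0_1). intros y Hy Hpos. simpl in Hy.
  apply Rabs_def2 in Hy. split; [exact Hpos | unfold minus, plus, opp in Hy; simpl in Hy; lra].
Qed.

Lemma filter_prod_right0_pinfty (P : R -> R -> Prop) :
  (forall a b, 0 < a < 1 -> 1 < b -> P a b) ->
  filter_prod (at_right 0) (Rbar_locally p_infty) (fun ab => P (fst ab) (snd ab)).
Proof.
  intros H. exists (fun a => 0 < a < 1) (fun b => 1 < b);
    [exact at_right_0_lt_1 | exists 1; auto | intros a b Ha Hb; apply H; assumption].
Qed.

Lemma is_RInt_gen_pow_mult_exp_opp k :
  is_RInt_gen (fun t => t ^ k * exp (- t)) (at_right 0) (Rbar_locally p_infty) (INR (fact k)).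
Proof.
  apply is_RInt_gen_ext with (Derive (powexp_primitive k)).
  - apply filter_forall. intros ab x _. apply is_derive_unique, is_derive_powexp_primitive.
  - replace (INR (fact k)) with (0 - - INR (fact k)) by ring.
    apply is_RInt_gen_Derive.
    + apply filter_forall. intros ab x _. eexists; apply is_derive_powexp_primitive.
    + apply filter_forall. intros ab x _.
      apply continuous_ext with (fun t => t ^ k * exp (- t));
        [intro; symmetry; apply is_derive_unique, is_derive_powexp_primitive |].
      apply (ex_derive_continuous (fun t => t ^ k * exp (- t))). auto_derive. exact I.
    + rewrite <- powexp_primitive_0. intros P HP. apply filter_le_within.
      apply (ex_derive_continuous (powexp_primitive k)); [| exact HP].
      eexists. apply is_derive_powexp_primitive.
    + apply is_lim_powexp_primitive.
Qed.

Lemma ex_RInt_pos (h : R -> R) a b : (forall t, 0 < t -> continuous h t) ->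
  0 < a -> 0 < b -> ex_RInt h a b.
Proof.
  intros Hc Ha Hb. apply (@ex_RInt_continuous R_CompleteNormedModule). intros z Hz. apply Hc.
  assert (0 < Rmin a b) by (apply Rmin_glb_lt; assumption). lra.
Qed.

Lemma RInt_Chasles_pos (h : R -> R) a b c : (forall t, 0 < t -> continuous h t) ->
  0 < a -> 0 < b -> 0 < c -> RInt h a c = RInt h a b + RInt h b c.
Proof. intros. symmetry. apply (RInt_Chasles h a b c); apply ex_RInt_pos; assumption. Qed.

Lemma filter_is_RInt_pos (h : R -> R) : (forall t, 0 < t -> continuous h t) ->
  filter_prod (at_right 0) (Rbar_locally p_infty)
    (fun ab => (exists y, is_RInt h (fst ab) (snd ab) y) /\
      (forall y1 y2, is_RInt h (fst ab) (snd ab) y1 -> is_RInt h (fst ab) (snd ab) y2 -> y1 = y2)).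
Proof.
  intros Hh. apply (filter_prod_right0_pinfty (fun a b => (exists y, is_RInt h a b y) /\
    (forall y1 y2, is_RInt h a b y1 -> is_RInt h a b y2 -> y1 = y2))).
  intros a b Ha Hb. split.
  - exists (RInt h a b). apply (@RInt_correct R_CompleteNormedModule), ex_RInt_pos; auto; lra.
  - intros y1 y2 H1 H2. apply (@is_RInt_unique R_CompleteNormedModule) in H1, H2. congruence.
Qed.

Section Comparison.
Variables f g : R -> R.
Hypothesis f_cont : forall t, 0 < t -> continuous f t.
Hypothesis g_cont : forall t, 0 < t -> continuous g t.
Hypothesis f_le_g : forall t, 0 < t -> 0 <= f t <= g t.

Lemma Rabs_RInt_le x y : 0 < x -> 0 < y -> Rabs (RInt f x y) <= Rabs (RInt g x y).
Proof.
  intros Hx Hy.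
  assert (K : forall u v, 0 < u -> u <= v -> Rabs (RInt f u v) <= Rabs (RInt g u v)).
  { intros u v Hu Huv. eapply Rle_trans; [| apply Rle_abs].
    apply (@norm_RInt_le R_NormedModule f g u v (RInt f u v) (RInt g u v)); [exact Huv | | |].
    - intros z Hz. specialize (f_le_g z ltac:(lra)).
      unfold norm; simpl; unfold abs; simpl. rewrite Rabs_pos_eq; lra.
    - apply (@RInt_correct R_CompleteNormedModule), ex_RInt_pos; auto; lra.
    - apply (@RInt_correct R_CompleteNormedModule), ex_RInt_pos; auto; lra. }
  destruct (Rle_lt_dec x y); [apply K; assumption |].
  rewrite <- (opp_RInt_swap f), <- (opp_RInt_swap g) by (apply ex_RInt_pos; assumption).
  unfold opp; simpl. rewrite !Rabs_Ropp. apply K; lra.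
Qed.

Lemma Rabs_RInt_sub_le a a' b b' : 0 < a -> 0 < a' -> 0 < b -> 0 < b' ->
  Rabs (RInt f a' b' - RInt f a b) <= Rabs (RInt g a a') + Rabs (RInt g b' b).
Proof.
  intros Ha Ha' Hb Hb'.
  rewrite (RInt_Chasles_pos f a a' b), (RInt_Chasles_pos f a' b' b) by assumption.
  replace (RInt f a' b' - (RInt f a a' + (RInt f a' b' + RInt f b' b)))
    with (- (RInt f a a' + RInt f b' b)) by ring.
  rewrite Rabs_Ropp. eapply Rle_trans; [apply Rabs_triang |].
  apply Rplus_le_compat; apply Rabs_RInt_le; assumption.
Qed.

(* Cauchy criterion: the integrals of [g], hence of [f], over [(a, a')] and [(b', b)] are
   small. *)
Lemma ex_RInt_gen_le lg : is_RInt_gen g (at_right 0) (Rbar_locally p_infty) lg ->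
  ex_RInt_gen f (at_right 0) (Rbar_locally p_infty).
Proof.
  intros Hg.
  pose proof (proj2 (filterlimi_locally_cauchy (fun ab => is_RInt g (fst ab) (snd ab))
                       (filter_is_RInt_pos g g_cont)) (ex_intro _ lg Hg)) as Cg.
  apply (proj1 (filterlimi_locally_cauchy (fun ab => is_RInt f (fst ab) (snd ab))
                  (filter_is_RInt_pos f f_cont))).
  intros eps. destruct (Cg (pos_div_2 eps)) as [P [[Q R HQ HR HQR] HC]].
  exists (fun u => (Q (fst u) /\ 0 < fst u < 1) /\ (R (snd u) /\ 1 < snd u)). split.
  { apply Filter_prod with (fun a => Q a /\ 0 < a < 1) (fun b => R b /\ 1 < b).
    - apply filter_and; [exact HQ | exact at_right_0_lt_1].
    - apply filter_and; [exact HR | exists 1; auto].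
    - intros x y Hx Hy. split; assumption. }
  intros [a b] [a' b'] [[Qa Ha] [Rb Hb]] [[Qa' Ha'] [Rb' Hb']] u v Hu Hv. simpl in *.
  apply (@is_RInt_unique R_CompleteNormedModule) in Hu, Hv. subst u v.
  assert (G : forall x y x' y', Q x -> R y -> Q x' -> R y' -> 0 < x < 1 -> 0 < x' < 1 ->
             1 < y -> 1 < y' -> Rabs (RInt g x' y' - RInt g x y) < eps / 2).
  { intros x y x' y' H1 H2 H3 H4 H5 H6 H7 H8.
    apply (HC (x, y) (x', y') (HQR _ _ H1 H2) (HQR _ _ H3 H4));
      apply (@RInt_correct R_CompleteNormedModule), ex_RInt_pos; auto; simpl; lra. }
  pose proof (G a b a' b Qa Rb Qa' Rb Ha Ha' Hb Hb) as G1.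
  pose proof (G a' b a' b' Qa' Rb Qa' Rb' Ha' Ha' Hb Hb') as G2.
  rewrite (RInt_Chasles_pos g a a' b) in G1 by (auto; lra).
  rewrite (RInt_Chasles_pos g a' b' b) in G2 by (auto; lra).
  replace (RInt g a' b - (RInt g a a' + RInt g a' b)) with (- RInt g a a') in G1 by ring.
  replace (RInt g a' b' - (RInt g a' b' + RInt g b' b)) with (- RInt g b' b) in G2 by ring.
  rewrite Rabs_Ropp in G1, G2.
  change (Rabs (RInt f a' b' - RInt f a b) < eps).
  eapply Rle_lt_trans; [apply Rabs_RInt_sub_le; lra |]. simpl in G1, G2. lra.
Qed.
End Comparison.

Lemma is_RInt_gen_le (f g : R -> R) lf lg : (forall t, 0 < t -> f t <= g t) ->
  is_RInt_gen f (at_right 0) (Rbar_locally p_infty) lf ->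
  is_RInt_gen g (at_right 0) (Rbar_locally p_infty) lg -> lf <= lg.
Proof.
  intros Hfg Hf Hg.
  pose proof (@RInt_gen_norm R_CompleteNormedModule (at_right 0) (Rbar_locally p_infty) _ _
                (fun t => scal 0 (f t)) (fun t => minus (g t) (f t))
                (scal 0 lf) (minus lg lf)) as K.
  assert (H : norm (scal 0 lf) <= minus lg lf).
  { apply K.
    - apply (filter_prod_right0_pinfty (fun a b => a <= b)). intros; lra.
    - apply (filter_prod_right0_pinfty
               (fun a b => forall t, a <= t <= b -> norm (scal 0 (f t)) <= minus (g t) (f t))).
      intros a b Ha Hb t Ht. unfold scal, norm, minus, plus, opp; simpl; unfold mult, abs; simpl.
      rewrite Rmult_0_l, Rabs_R0. specialize (Hfg t ltac:(lra)). lra.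
    - exact (is_RInt_gen_scal f 0 lf Hf).
    - exact (is_RInt_gen_minus g f lg lf Hg Hf). }
  unfold scal, norm, minus, plus, opp in H; simpl in H; unfold mult, abs in H; simpl in H.
  rewrite Rmult_0_l, Rabs_R0 in H. lra.
Qed.

Lemma is_RInt_gen_ext_pos (f g : R -> R) l : (forall t, 0 < t -> f t = g t) ->
  is_RInt_gen f (at_right 0) (Rbar_locally p_infty) l ->
  is_RInt_gen g (at_right 0) (Rbar_locally p_infty) l.
Proof.
  intros E H. apply is_RInt_gen_ext with f; [| exact H].
  apply (filter_prod_right0_pinfty (fun a b => forall x, Rmin a b < x < Rmax a b -> f x = g x)).
  intros a b Ha Hb x Hx. apply E. rewrite Rmin_left in Hx; lra.
Qed.

(** * The Gamma function *)

Lemma exp_le_mono x y : x <= y -> exp x <= exp y.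
Proof. intros [H | ->]; [left; apply exp_increasing, H | apply Rle_refl]. Qed.

Lemma ln_le_mono x y : 0 < x -> x <= y -> ln x <= ln y.
Proof. intros Hx [H | ->]; [left; apply ln_increasing; assumption | apply Rle_refl]. Qed.

Lemma Rpower_le_anti_exp t x y : 0 < t <= 1 -> x <= y -> Rpower t y <= Rpower t x.
Proof.
  intros Ht Hxy. unfold Rpower. apply exp_le_mono.
  assert (ln t <= 0) by (rewrite <- ln_1; apply ln_le_mono; lra). nra.
Qed.

Lemma Rpower_le_anti_base t T x : 0 < T <= t -> x <= 0 -> Rpower t x <= Rpower T x.
Proof.
  intros HT Hx. unfold Rpower. apply exp_le_mono.
  assert (ln T <= ln t) by (apply ln_le_mono; lra). nra.
Qed.

Lemma Rpower_le_plus t u x v : 0 < t -> u <= x <= v -> Rpower t x <= Rpower t u + Rpower t v.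
Proof.
  intros Ht Hx. pose proof (exp_pos (u * ln t)). pose proof (exp_pos (v * ln t)).
  destruct (Rle_lt_dec t 1).
  - assert (Rpower t x <= Rpower t u) by (apply Rpower_le_anti_exp; lra). unfold Rpower in *; lra.
  - assert (Rpower t x <= Rpower t v) by (apply Rle_Rpower; lra). unfold Rpower in *; lra.
Qed.

Lemma Rpower_minus_le t v u x : 0 < t -> v <= u <= x -> Rpower t u - Rpower t v <= Rpower t x.
Proof.
  intros Ht Hx. pose proof (exp_pos (v * ln t)). pose proof (exp_pos (x * ln t)).
  destruct (Rle_lt_dec t 1).
  - assert (Rpower t u <= Rpower t v) by (apply Rpower_le_anti_exp; lra). unfold Rpower in *; lra.
  - assert (Rpower t u <= Rpower t x) by (apply Rle_Rpower; lra). unfold Rpower in *; lra.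
Qed.

Lemma Rpower_ge_quadratic t x : 0 < t -> 0 <= x <= 1 -> t - t * t / 4 <= Rpower t x.
Proof.
  intros Ht Hx. destruct (Rle_lt_dec t 1).
  - assert (Rpower t 1 <= Rpower t x) by (apply Rpower_le_anti_exp; lra).
    rewrite Rpower_1 in H by lra. nra.
  - assert (Rpower t 0 <= Rpower t x) by (apply Rle_Rpower; lra).
    rewrite Rpower_O in H by lra. pose proof (Rle_0_sqr (t - 2)). unfold Rsqr in *. nra.
Qed.

Lemma Rpower_le_split t T p x : 0 < t -> 1 <= T -> 0 <= x <= p ->
  Rpower t (p - x) <= Rpower T p + Rpower T (- x) * Rpower t p.
Proof.
  intros Ht HT Hx.
  pose proof (exp_pos (p * ln T)). pose proof (exp_pos (p * ln t)).
  pose proof (exp_pos (- x * ln T)).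
  destruct (Rle_lt_dec t T).
  - assert (Rpower t (p - x) <= Rpower T (p - x)) by (apply Rle_Rpower_l; lra).
    assert (Rpower T (p - x) <= Rpower T p) by (apply Rle_Rpower; lra).
    unfold Rpower in *. nra.
  - replace (p - x) with (p + - x) by ring. rewrite Rpower_plus.
    assert (Rpower t (- x) <= Rpower T (- x)) by (apply Rpower_le_anti_base; lra).
    unfold Rpower in *. nra.
Qed.

Definition Gamma_integrand (s t : R) : R := Rpower t (s - 1) * exp (- t).

Lemma ex_RInt_gen_Gamma s : 1 <= s ->
  ex_RInt_gen (Gamma_integrand s) (at_right 0) (Rbar_locally p_infty).
Proof.
  intros Hs. destruct (INR_unbounded (s - 1)) as [k Hk].
  apply (ex_RInt_gen_le _ (fun t => t ^ 0 * exp (- t) + t ^ k * exp (- t)))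
    with (INR (fact 0) + INR (fact k)).
  - intros t Ht. apply (ex_derive_continuous (Gamma_integrand s)).
    unfold Gamma_integrand, Rpower. auto_derive. lra.
  - intros t _. apply (ex_derive_continuous (fun t => t ^ 0 * exp (- t) + t ^ k * exp (- t))).
    auto_derive. exact I.
  - intros t Ht. unfold Gamma_integrand. pose proof (exp_pos (- t)). split.
    + apply Rmult_le_pos; left; [apply exp_pos | assumption].
    + rewrite <- Rmult_plus_distr_r, <- (Rpower_pow 0 t), <- (Rpower_pow k t) by assumption.
      apply Rmult_le_compat_r; [lra |]. apply Rpower_le_plus; simpl; lra.
  - exact (is_RInt_gen_plus _ _ _ _ (is_RInt_gen_pow_mult_exp_opp 0)
             (is_RInt_gen_pow_mult_exp_opp k)).
Qed.

Lemma is_RInt_gen_Gamma s : 1 <= s ->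
  is_RInt_gen (Gamma_integrand s) (at_right 0) (Rbar_locally p_infty) (Gamma s).
Proof.
  intros Hs.
  exact (@RInt_gen_correct R_CompleteNormedModule _ _
           (Proper_StrongProper _ (at_right_proper_filter 0))
           (Proper_StrongProper _ (Rbar_locally_filter p_infty)) _ (ex_RInt_gen_Gamma s Hs)).
Qed.

Lemma Gamma_INR_S n : Gamma (INR n + 1) = INR (fact n).
Proof.
  unfold Gamma.
  apply (@is_RInt_gen_unique R_CompleteNormedModule _ _
           (Proper_StrongProper _ (at_right_proper_filter 0))
           (Proper_StrongProper _ (Rbar_locally_filter p_infty))).
  apply (is_RInt_gen_ext_pos (fun t => t ^ n * exp (- t))); [| apply is_RInt_gen_pow_mult_exp_opp].
  intros t Ht. rewrite <- Rpower_pow by exact Ht. replace (INR n + 1 - 1) with (INR n) by ring.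
  reflexivity.
Qed.

Lemma INR_fact_ge1 n : 1 <= INR (fact n).
Proof. apply (le_INR 1), lt_O_fact. Qed.

Lemma Gamma_nat_2 n : Gamma (INR n + 2) = INR (fact (S n)).
Proof. rewrite <- Gamma_INR_S, S_INR. f_equal. ring. Qed.

Lemma INR_S_le_pow2 n : INR (S n) <= 2 ^ n.
Proof.
  induction n as [|n IH]; [simpl; lra |].
  rewrite S_INR. change (2 ^ S n) with (2 * 2 ^ n).
  assert (1 <= 2 ^ n) by (apply pow_R1_Rle; lra). lra.
Qed.

Section FractionalOrder.
Variable a : R.
Hypothesis a_range : 0 < a < 1.

Lemma is_RInt_gen_Gamma_shift n :
  is_RInt_gen (fun t => Rpower t (INR n + 1 - a) * exp (- t)) (at_right 0) (Rbar_locally p_infty)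
    (Gamma (INR n + 2 - a)).
Proof.
  apply (is_RInt_gen_ext_pos (Gamma_integrand (INR n + 2 - a))).
  - intros t _. unfold Gamma_integrand. replace (INR n + 2 - a - 1) with (INR n + 1 - a) by ring.
    reflexivity.
  - apply is_RInt_gen_Gamma. pose proof (pos_INR n). lra.
Qed.

Lemma Gamma_shift_ge_fact_sub1 n : INR (fact n) - 1 <= Gamma (INR n + 2 - a).
Proof.
  apply (is_RInt_gen_le (fun t => minus (t ^ n * exp (- t)) (t ^ 0 * exp (- t)))
           (fun t => Rpower t (INR n + 1 - a) * exp (- t)) (minus (INR (fact n)) (INR (fact 0)))).
  - intros t Ht. unfold minus, plus, opp; simpl.
    assert (Rpower t (INR n) - Rpower t 0 <= Rpower t (INR n + 1 - a))
      by (apply Rpower_minus_le; pose proof (pos_INR n); lra).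
    rewrite Rpower_pow, Rpower_O in H by exact Ht.
    pose proof (exp_pos (- t)). nra.
  - exact (is_RInt_gen_minus _ _ _ _ (is_RInt_gen_pow_mult_exp_opp n)
             (is_RInt_gen_pow_mult_exp_opp 0)).
  - apply is_RInt_gen_Gamma_shift.
Qed.

Lemma Gamma_shift_ge_fact_sub_quarter n :
  INR (fact (S n)) - / 4 * INR (fact (S (S n))) <= Gamma (INR n + 2 - a).
Proof.
  apply (is_RInt_gen_le
           (fun t => minus (t ^ S n * exp (- t)) (scal (/ 4) (t ^ S (S n) * exp (- t))))
           (fun t => Rpower t (INR n + 1 - a) * exp (- t))
           (minus (INR (fact (S n))) (scal (/ 4) (INR (fact (S (S n))))))).
  - intros t Ht. unfold minus, plus, opp, scal; simpl; unfold mult; simpl.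
    replace (INR n + 1 - a) with (INR n + (1 - a)) by ring.
    rewrite Rpower_plus, Rpower_pow by exact Ht.
    assert (t - t * t / 4 <= Rpower t (1 - a)) by (apply Rpower_ge_quadratic; lra).
    pose proof (pow_le t n (Rlt_le _ _ Ht)). pose proof (exp_pos (- t)).
    apply Rle_trans with (t ^ n * (t - t * t / 4) * exp (- t)); [right; field |].
    apply Rmult_le_compat_r; [lra |]. apply Rmult_le_compat_l; assumption.
  - exact (is_RInt_gen_minus _ _ _ _ (is_RInt_gen_pow_mult_exp_opp (S n))
             (is_RInt_gen_scal _ (/ 4) _ (is_RInt_gen_pow_mult_exp_opp (S (S n))))).
  - apply is_RInt_gen_Gamma_shift.
Qed.

Lemma Gamma_shift_le n T : 1 <= T ->
  Gamma (INR n + 2 - a) <= T ^ S n + Rpower T (- a) * INR (fact (S n)).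
Proof.
  intros HT.
  apply Rle_trans with (T ^ S n * INR (fact 0) + Rpower T (- a) * INR (fact (S n)));
    [| simpl; lra].
  apply (is_RInt_gen_le (fun t => Rpower t (INR n + 1 - a) * exp (- t))
           (fun t => plus (scal (T ^ S n) (t ^ 0 * exp (- t)))
                          (scal (Rpower T (- a)) (t ^ S n * exp (- t))))
           (Gamma (INR n + 2 - a))
           (plus (scal (T ^ S n) (INR (fact 0))) (scal (Rpower T (- a)) (INR (fact (S n)))))).
  - intros t Ht.
    assert (Rpower t (INR n + 1 - a) <= T ^ S n + Rpower T (- a) * t ^ S n).
    { rewrite <- !(Rpower_pow (S n)), S_INR by lra.
      apply Rpower_le_split; [assumption | assumption | pose proof (pos_INR n); lra]. }
    apply Rle_trans with ((T ^ S n + Rpower T (- a) * t ^ S n) * exp (- t));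
      [apply Rmult_le_compat_r; [left; apply exp_pos | assumption] |].
    unfold plus, scal; simpl; unfold mult; simpl. right; ring.
  - apply is_RInt_gen_Gamma_shift.
  - exact (is_RInt_gen_plus _ _ _ _
             (is_RInt_gen_scal _ (T ^ S n) _ (is_RInt_gen_pow_mult_exp_opp 0))
             (is_RInt_gen_scal _ (Rpower T (- a)) _ (is_RInt_gen_pow_mult_exp_opp (S n)))).
Qed.

Lemma Gamma_shift_ge_half_fact n : INR (fact n) / 2 <= Gamma (INR n + 2 - a).
Proof.
  destruct n as [| [| n]].
  - pose proof (Gamma_shift_ge_fact_sub_quarter 0). simpl in *. lra.
  - pose proof (Gamma_shift_ge_fact_sub_quarter 1). simpl in *. lra.
  - pose proof (Gamma_shift_ge_fact_sub1 (S (S n))).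
    assert (2 <= INR (fact (S (S n)))).
    { rewrite fact_simpl, mult_INR, !S_INR. pose proof (INR_fact_ge1 (S n)). pose proof (pos_INR n).
      nra. }
    lra.
Qed.

Lemma Gamma_shift_pos n : 0 < Gamma (INR n + 2 - a).
Proof. pose proof (Gamma_shift_ge_half_fact n). pose proof (INR_fact_ge1 n). lra. Qed.

Lemma Gamma_2_sub_ge : 1 / 2 <= Gamma (2 - a).
Proof.
  pose proof (Gamma_shift_ge_half_fact 0) as H. simpl in H.
  replace (0 + 2 - a) with (2 - a) in H by ring. lra.
Qed.

Definition LD_factor (n : nat) : R := Gamma (INR n + 2) * Gamma (2 - a) / Gamma (INR n + 2 - a).

Lemma LD_factor_pos n : 0 < LD_factor n.
Proof.
  unfold LD_factor. rewrite Gamma_nat_2.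
  pose proof (Gamma_shift_pos n). pose proof (INR_fact_ge1 (S n)). pose proof Gamma_2_sub_ge.
  apply Rdiv_lt_0_compat; [apply Rmult_lt_0_compat |]; lra.
Qed.

Lemma LD_factor_le n : LD_factor n <= 2 * Gamma (2 - a) * INR (S n).
Proof.
  unfold LD_factor. rewrite Gamma_nat_2, fact_simpl, mult_INR.
  pose proof (Gamma_shift_ge_half_fact n). pose proof (Gamma_shift_pos n).
  pose proof Gamma_2_sub_ge. pose proof (INR_fact_ge1 n). pose proof (pos_INR (S n)).
  apply (Rmult_le_reg_r (Gamma (INR n + 2 - a))); [assumption |].
  unfold Rdiv. rewrite Rmult_assoc, Rinv_l, Rmult_1_r by lra.
  assert (0 <= Gamma (2 - a) * INR (S n)) by (apply Rmult_le_pos; lra). nra.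
Qed.

(* Take [T] in [Gamma_shift_le] so large that [T^(-a)] is small. *)
Lemma Gamma_shift_little_o c : 0 < c ->
  exists N, forall n, (N <= n)%nat -> Gamma (INR n + 2 - a) <= 2 * c * INR (fact (S n)).
Proof.
  intros Hc. set (T := exp (Rmax 0 (- ln c / a))).
  assert (HT : 1 <= T) by (rewrite <- exp_0; apply exp_le_mono, Rmax_l).
  assert (HTa : Rpower T (- a) <= c).
  { unfold T, Rpower. rewrite ln_exp.
    apply Rle_trans with (exp (ln c)); [apply exp_le_mono | rewrite exp_ln; lra].
    assert (- ln c / a <= Rmax 0 (- ln c / a)) by apply Rmax_r.
    apply (Rmult_le_compat_r a) in H; [| lra]. unfold Rdiv in H.
    rewrite Rmult_assoc, Rinv_l, Rmult_1_r in H by lra. nra. }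
  destruct (cv_speed_pow_fact T c Hc) as [N HN].
  exists N. intros n Hn. pose proof (INR_fact_ge1 (S n)) as Hf.
  assert (HTn : T ^ S n <= c * INR (fact (S n))).
  { specialize (HN (S n) ltac:(lia)). unfold R_dist in HN. rewrite Rminus_0_r in HN.
    apply Rabs_def2 in HN. destruct HN as [HN _].
    apply (Rmult_lt_compat_r (INR (fact (S n)))) in HN; [| lra]. unfold Rdiv in HN.
    rewrite Rmult_assoc, Rinv_l, Rmult_1_r in HN by lra. lra. }
  pose proof (Gamma_shift_le n T HT).
  assert (Rpower T (- a) * INR (fact (S n)) <= c * INR (fact (S n)))
    by (apply Rmult_le_compat_r; lra).
  lra.
Qed.

Lemma LD_factor_unbounded M : exists N, forall n, (N <= n)%nat -> M <= LD_factor n.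
Proof.
  set (K := Gamma (2 - a)). pose proof Gamma_2_sub_ge as HK. fold K in HK.
  set (M' := Rmax M 1). assert (HM : 1 <= M') by apply Rmax_r.
  set (c := K / (2 * M')). assert (Hc : 0 < c) by (apply Rdiv_lt_0_compat; lra).
  destruct (Gamma_shift_little_o c Hc) as [N HN]. exists N. intros n Hn.
  specialize (HN n Hn). pose proof (Gamma_shift_pos n). pose proof (INR_fact_ge1 (S n)).
  unfold LD_factor. rewrite Gamma_nat_2. fold K.
  apply Rle_trans with M'; [apply Rmax_l |].
  apply (Rmult_le_reg_r (Gamma (INR n + 2 - a))); [assumption |].
  unfold Rdiv. rewrite Rmult_assoc, Rinv_l, Rmult_1_r by lra.
  apply Rle_trans with (M' * (2 * c * INR (fact (S n)))); [apply Rmult_le_compat_l; lra |].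
  unfold c. right. field. lra.
Qed.

(** * The coefficients of E_alpha and the equation *)

Lemma prodG_pos n : 0 < prodG a n.
Proof.
  induction n as [|n IH]; simpl; [lra |]. apply Rmult_lt_0_compat; [exact IH |].
  rewrite Gamma_nat_2. pose proof (INR_fact_ge1 (S n)).
  apply Rdiv_lt_0_compat; [lra | apply Gamma_shift_pos].
Qed.

Lemma Ecoef_pos n : 0 < Ecoef a n.
Proof.
  apply Rinv_0_lt_compat, Rmult_lt_0_compat; [| apply prodG_pos].
  apply pow_lt. pose proof Gamma_2_sub_ge. lra.
Qed.

Lemma Ecoef_0 : Ecoef a 0 = 1.
Proof. unfold Ecoef. simpl. field. Qed.

Lemma Ecoef_S n : Ecoef a (S n) * LD_factor n = Ecoef a n.
Proof.
  unfold Ecoef, LD_factor. simpl.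
  pose proof (prodG_pos n). pose proof (Gamma_shift_pos n). pose proof Gamma_2_sub_ge.
  rewrite Gamma_nat_2. pose proof (INR_fact_ge1 (S n)).
  assert (0 < Gamma (2 - a) ^ n) by (apply pow_lt; lra).
  field. repeat split; lra.
Qed.

Lemma ex_series_Ecoef rho : 0 <= rho -> ex_series (fun n => Ecoef a n * rho ^ n).
Proof.
  intros Hrho. apply ex_series_ratio_half.
  - intro n. apply Rmult_le_pos; [left; apply Ecoef_pos | apply pow_le, Hrho].
  - destruct (LD_factor_unbounded (2 * rho)) as [N HN]. exists N. intros n Hn.
    specialize (HN n Hn). rewrite <- (Ecoef_S n).
    pose proof (Ecoef_pos (S n)). pose proof (pow_le rho n Hrho). simpl.
    assert (0 <= Ecoef a (S n) * rho ^ n) by (apply Rmult_le_pos; lra). nra.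
Qed.

Lemma Ecoef_1 : Ecoef a 1 = / LD_factor 0.
Proof.
  pose proof (Ecoef_S 0) as H. rewrite Ecoef_0 in H. pose proof (LD_factor_pos 0).
  apply (Rmult_eq_reg_r (LD_factor 0)); [rewrite H; field | ]; lra.
Qed.

Lemma LDcoef_LD_factor c n : LDcoef a c n = (c (S n) * RtoC (LD_factor n))%C.
Proof. reflexivity. Qed.

(* [LD_factor n <= C 2^n], while the coefficients of [c] are bounded at radius [4|z| + 1]. *)
Lemma entire_coef_LDcoef c : entire_coef c -> entire_coef (LDcoef a c).
Proof.
  intros Hc z. pose proof (Cmod_ge_0 z) as Hz.
  set (w := 4 * Cmod z + 1). assert (Hw : 1 <= w) by (unfold w; lra).
  destruct (ex_series_C_bounded _ (Hc (RtoC w))) as [M HM].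
  assert (HM0 : 0 <= M) by (eapply Rle_trans; [apply Cmod_ge_0 | apply (HM 0%nat)]).
  set (K := Gamma (2 - a)). pose proof Gamma_2_sub_ge as HK. fold K in HK.
  set (q := 2 * Cmod z / w).
  assert (Hq : 0 <= q < 1).
  { unfold q. split; [apply Rmult_le_pos; [lra | left; apply Rinv_0_lt_compat; lra] |].
    apply (Rmult_lt_reg_r w); [lra |]. unfold Rdiv. rewrite Rmult_assoc, Rinv_l by lra.
    unfold w; lra. }
  apply (@ex_series_le C_AbsRing C_CompleteNormedModule _ (fun n => 2 * K * M / w * q ^ n));
    [| apply (@ex_series_scal R_AbsRing R_NormedModule), ex_series_geom; rewrite Rabs_pos_eq; lra].
  intros n. change (norm (LDcoef a c n * z ^ n)%C) with (Cmod (LDcoef a c n * z ^ n)%C).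
  rewrite LDcoef_LD_factor, !Cmod_mult, Cmod_pow, Cmod_R, Rabs_pos_eq
    by (left; apply LD_factor_pos).
  assert (Hcn : Cmod (c (S n)) * w ^ S n <= M).
  { specialize (HM (S n)). rewrite Cmod_mult, Cmod_pow, Cmod_R, Rabs_pos_eq in HM by lra.
    exact HM. }
  assert (Hfac : LD_factor n <= 2 * K * 2 ^ n).
  { eapply Rle_trans; [apply LD_factor_le |].
    apply Rmult_le_compat_l; [lra | apply INR_S_le_pow2]. }
  assert (Hwn : 0 < w ^ S n) by (apply pow_lt; lra).
  pose proof (Cmod_ge_0 (c (S n))). pose proof (LD_factor_pos n). pose proof (pow_le (Cmod z) n Hz).
  apply (Rmult_le_reg_r (w ^ S n)); [exact Hwn |].
  replace (2 * K * M / w * q ^ n * w ^ S n) with (M * (2 * K * 2 ^ n) * Cmod z ^ n)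
    by (unfold q, Rdiv; rewrite !Rpow_mult_distr, pow_inv; simpl; field;
        split; [apply pow_nonzero |]; lra).
  replace (Cmod (c (S n)) * LD_factor n * Cmod z ^ n * w ^ S n)
    with (Cmod (c (S n)) * w ^ S n * LD_factor n * Cmod z ^ n) by ring.
  apply Rmult_le_compat_r; [assumption |].
  apply Rmult_le_compat; [apply Rmult_le_pos; lra | lra | assumption | assumption].
Qed.

Open Scope C_scope.

Lemma RtoC_neq0 (r : R) : r <> 0%R -> RtoC r <> 0.
Proof. intros H E. apply H. now injection E. Qed.

Lemma Cmult_eq_reg_r (x y g : C) : g <> 0 -> x * g = y * g -> x = y.
Proof.
  intros Hg E. replace x with (x * g * / g) by (field; exact Hg). rewrite E. field. exact Hg.
Qed.

Lemma Cminus_neq_0 (u v : C) : u <> v -> u - v <> 0.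
Proof. intros Huv E. apply Huv. transitivity (u - v + v); [ring | rewrite E; ring]. Qed.

Lemma Cdiv_neq_0 (x y : C) : x <> 0 -> y <> 0 -> x / y <> 0.
Proof.
  intros Hx Hy E. apply Hx. replace x with (x / y * y) by (field; exact Hy). rewrite E. ring.
Qed.

Lemma LD_factor_C_neq0 n : RtoC (LD_factor n) <> 0.
Proof. apply RtoC_neq0. pose proof (LD_factor_pos n). lra. Qed.

(* Coefficients of [t |-> E_alpha(l t)] and of [t |-> t E_alpha'(l t)]. *)
Definition eigen_coef (l : C) (n : nat) : C := RtoC (Ecoef a n) * l ^ n.
Definition gen_eigen_coef (l : C) (n : nat) : C :=
  match n with O => 0 | S m => RtoC (INR (S m) * Ecoef a (S m)) * l ^ m end.

Lemma entire_eigen_coef l : entire_coef (eigen_coef l).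
Proof.
  apply (entire_coef_dominated _ (Ecoef a) (Cmod l)); [exact ex_series_Ecoef | apply Cmod_ge_0 |].
  intro n. unfold eigen_coef.
  rewrite Cmod_mult, Cmod_pow, Cmod_R, Rabs_pos_eq by (left; apply Ecoef_pos). apply Rle_refl.
Qed.

Lemma entire_gen_eigen_coef l : entire_coef (gen_eigen_coef l).
Proof.
  pose proof (Cmod_ge_0 l) as Hl.
  apply (entire_coef_dominated _ (Ecoef a) (2 * (Cmod l + 1)));
    [exact ex_series_Ecoef | lra |].
  intros [|m].
  - simpl. rewrite Cmod_0, Rmult_1_r. left; apply Ecoef_pos.
  - unfold gen_eigen_coef. pose proof (Ecoef_pos (S m)).
    rewrite Cmod_mult, Cmod_pow, Cmod_R, Rabs_pos_eq by (apply Rmult_le_pos; [apply pos_INR | lra]).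
    assert (H2m : (INR (S m) * Cmod l ^ m <= (2 * (Cmod l + 1)) ^ m)%R).
    { rewrite Rpow_mult_distr. apply Rmult_le_compat;
        [apply pos_INR | apply pow_le, Hl | apply INR_S_le_pow2 | apply pow_incr; lra]. }
    assert (Hm : ((2 * (Cmod l + 1)) ^ m <= (2 * (Cmod l + 1)) ^ S m)%R)
      by (apply Rle_pow; [lra | lia]).
    replace (INR (S m) * Ecoef a (S m) * Cmod l ^ m)%R
      with (Ecoef a (S m) * (INR (S m) * Cmod l ^ m))%R by ring.
    apply Rmult_le_compat_l; lra.
Qed.

Lemma Ealpha_scaled l t : Ealpha a (l * RtoC t) = CPSeries (eigen_coef l) (RtoC t).
Proof. unfold Ealpha. rewrite CPSeries_scale. reflexivity. Qed.

Lemma t_Ealpha'_scaled l t :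
  RtoC t * Ealpha' a (l * RtoC t) = CPSeries (gen_eigen_coef l) (RtoC t).
Proof.
  rewrite (CPSeries_shift _ t (entire_gen_eigen_coef l)) by reflexivity.
  unfold Ealpha'. rewrite CPSeries_scale. reflexivity.
Qed.

Lemma LDcoef_eigen_coef l n : LDcoef a (eigen_coef l) n = l * eigen_coef l n.
Proof.
  rewrite LDcoef_LD_factor. unfold eigen_coef. rewrite <- (Ecoef_S n), RtoC_mult. simpl. ring.
Qed.

Lemma LDcoef_gen_eigen_coef l n :
  LDcoef a (gen_eigen_coef l) n = eigen_coef l n + l * gen_eigen_coef l n.
Proof.
  rewrite LDcoef_LD_factor. unfold gen_eigen_coef, eigen_coef.
  destruct n as [|m].
  - rewrite <- (Ecoef_S 0), !RtoC_mult. change (INR 1) with 1%R. simpl Cpow. ring.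
  - rewrite <- (Ecoef_S (S m)), !RtoC_mult, (S_INR (S m)), RtoC_plus. simpl Cpow. ring.
Qed.

Lemma LDcoef_ext c d n : (forall k, c k = d k) -> LDcoef a c n = LDcoef a d n.
Proof. intros E. rewrite !LDcoef_LD_factor, E. reflexivity. Qed.

Lemma LDcoef_lin (k1 k2 : C) c d n :
  LDcoef a (fun j => k1 * c j + k2 * d j) n = k1 * LDcoef a c n + k2 * LDcoef a d n.
Proof. rewrite !LDcoef_LD_factor. ring. Qed.

Definition lhs_coef (a0 a1 : C) (c : nat -> C) (n : nat) : C :=
  LDcoef a (LDcoef a c) n + a1 * LDcoef a c n + a0 * c n.

Lemma lhs_coef_lin a0 a1 (k1 k2 : C) c d n :
  lhs_coef a0 a1 (fun j => k1 * c j + k2 * d j) n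
  = k1 * lhs_coef a0 a1 c n + k2 * lhs_coef a0 a1 d n.
Proof.
  unfold lhs_coef. rewrite (LDcoef_ext _ (fun j => k1 * LDcoef a c j + k2 * LDcoef a d j))
    by (intro; apply LDcoef_lin).
  rewrite !LDcoef_lin. ring.
Qed.

Lemma lhs_coef_expand a0 a1 c n : lhs_coef a0 a1 c n =
  c (S (S n)) * (RtoC (LD_factor (S n)) * RtoC (LD_factor n))
  + (a1 * c (S n) * RtoC (LD_factor n) + a0 * c n).
Proof. unfold lhs_coef. rewrite !LDcoef_LD_factor. ring. Qed.

Lemma CPSeries_lhs_coef a0 a1 c t : entire_coef c ->
  CPSeries (lhs_coef a0 a1 c) (RtoC t) =
  CPSeries (LDcoef a (LDcoef a c)) (RtoC t) + a1 * CPSeries (LDcoef a c) (RtoC t)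
  + a0 * CPSeries c (RtoC t).
Proof.
  intros Hc. pose proof (entire_coef_LDcoef c Hc) as H1. pose proof (entire_coef_LDcoef _ H1) as H2.
  unfold lhs_coef.
  rewrite CPSeries_plus, CPSeries_plus, !CPSeries_scal;
    auto using entire_coef_plus, entire_coef_scal.
Qed.

Lemma solves_eq_iff_lhs_coef a0 a1 c : entire_coef c ->
  solves_eq a a0 a1 c <-> forall n, lhs_coef a0 a1 c n = 0.
Proof.
  intros Hc. split.
  - intros Hs. apply CPSeries_coef_eq0.
    + unfold lhs_coef. auto using entire_coef_plus, entire_coef_scal, entire_coef_LDcoef.
    + intros t Ht. rewrite CPSeries_lhs_coef by exact Hc. apply Hs, Ht.
  - intros HL t Ht. rewrite <- CPSeries_lhs_coef by exact Hc.
    rewrite (CPSeries_ext _ (fun _ => 0)) by exact HL. apply CPSeries_zero.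
Qed.

Lemma lhs_coef_eq0_unique a0 a1 c d :
  (forall n, lhs_coef a0 a1 c n = 0) -> (forall n, lhs_coef a0 a1 d n = 0) ->
  c 0%nat = d 0%nat -> c 1%nat = d 1%nat -> forall n, c n = d n.
Proof.
  intros Hc Hd H0 H1.
  assert (H : forall n, c n = d n /\ c (S n) = d (S n)).
  { induction n as [|n [E1 E2]]; [split; assumption | split; [exact E2 |]].
    specialize (Hc n). specialize (Hd n). rewrite lhs_coef_expand, E1, E2 in Hc.
    rewrite lhs_coef_expand in Hd.
    assert (HG : RtoC (LD_factor (S n)) * RtoC (LD_factor n) <> 0)
      by (apply Cmult_neq_0; apply LD_factor_C_neq0).
    apply (Cmult_eq_reg_r _ _ _ HG).
    transitivity (- (a1 * d (S n) * RtoC (LD_factor n) + a0 * d n)).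
    - rewrite <- (Cplus_0_r (- _)), <- Hc. ring.
    - rewrite <- (Cplus_0_r (- _)), <- Hd. ring. }
  intro n. apply H.
Qed.

Lemma lhs_coef_eigen_coef a0 a1 l n :
  lhs_coef a0 a1 (eigen_coef l) n = (l * l + a1 * l + a0) * eigen_coef l n.
Proof.
  unfold lhs_coef.
  rewrite (LDcoef_ext _ (fun j => l * eigen_coef l j + 0 * eigen_coef l j))
    by (intro; rewrite LDcoef_eigen_coef; ring).
  rewrite LDcoef_lin, !LDcoef_eigen_coef. ring.
Qed.

Lemma lhs_coef_gen_eigen_coef a0 a1 l n :
  lhs_coef a0 a1 (gen_eigen_coef l) n
  = (2 * l + a1) * eigen_coef l n + (l * l + a1 * l + a0) * gen_eigen_coef l n.
Proof.
  unfold lhs_coef.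
  rewrite (LDcoef_ext _ (fun j => 1 * eigen_coef l j + l * gen_eigen_coef l j))
    by (intro; rewrite LDcoef_gen_eigen_coef; ring).
  rewrite LDcoef_lin, LDcoef_eigen_coef, !LDcoef_gen_eigen_coef. ring.
Qed.

Lemma eigen_coef_0 l : eigen_coef l 0 = 1.
Proof. unfold eigen_coef. rewrite Ecoef_0. simpl. ring. Qed.

Lemma eigen_coef_1 l : eigen_coef l 1 = l / RtoC (LD_factor 0).
Proof.
  unfold eigen_coef, Cdiv. rewrite Ecoef_1, RtoC_inv by apply Rgt_not_eq, LD_factor_pos.
  simpl Cpow. ring.
Qed.

Lemma gen_eigen_coef_1 l : gen_eigen_coef l 1 = / RtoC (LD_factor 0).
Proof.
  unfold gen_eigen_coef. change (INR 1) with 1%R.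
  rewrite Rmult_1_l, Ecoef_1, RtoC_inv by apply Rgt_not_eq, LD_factor_pos.
  simpl Cpow. ring.
Qed.

Lemma solves_ivp_of_coef a0 a1 x0 x01 (x : R -> C) c : entire_coef c ->
  (forall t, (0 <= t)%R -> x t = CPSeries c (RtoC t)) -> (forall n, lhs_coef a0 a1 c n = 0) ->
  c 0%nat = x0 -> c 1%nat * RtoC (LD_factor 0) = x01 ->
  solves_ivp a a0 a1 x0 x01 x /\
  (forall y, solves_ivp a a0 a1 x0 x01 y -> forall t, (0 <= t)%R -> y t = x t).
Proof.
  intros Hc Hx HL H0 H1. split.
  - exists c. repeat split; auto.
    + apply solves_eq_iff_lhs_coef; assumption.
    + rewrite Hx, CPSeries_at0 by apply Rle_refl. exact H0.
    + rewrite CPSeries_at0, LDcoef_LD_factor. exact H1.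
  - intros y [d [[Hd Hy] [Hs [Hy0 Hy1]]]] t Ht.
    rewrite (solves_eq_iff_lhs_coef _ _ d Hd) in Hs.
    assert (E : forall n, d n = c n).
    { apply (lhs_coef_eq0_unique a0 a1); auto.
      - rewrite <- (CPSeries_at0 d), <- Hy by apply Rle_refl. congruence.
      - rewrite CPSeries_at0, LDcoef_LD_factor in Hy1.
        apply (Cmult_eq_reg_r _ _ _ (LD_factor_C_neq0 0)). congruence. }
    rewrite Hy, Hx by exact Ht. apply CPSeries_ext, E.
Qed.

Lemma det2_independent (p q r s k1 k2 : C) : p * s - r * q <> 0 ->
  k1 * p + k2 * r = 0 -> k1 * q + k2 * s = 0 -> k1 = 0 /\ k2 = 0.
Proof.
  intros Hdet H0 H1. split; apply (Cmult_eq_reg_r _ _ _ Hdet).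
  - transitivity (s * (k1 * p + k2 * r) - r * (k1 * q + k2 * s)); [ring |].
    rewrite H0, H1. ring.
  - transitivity (p * (k1 * q + k2 * s) - q * (k1 * p + k2 * r)); [ring |].
    rewrite H0, H1. ring.
Qed.

Lemma det2_spanning (p q r s u0 u1 : C) : p * s - r * q <> 0 ->
  exists k1 k2, k1 * p + k2 * r = u0 /\ k1 * q + k2 * s = u1.
Proof.
  intros Hdet. exists ((u0 * s - r * u1) / (p * s - r * q)), ((p * u1 - u0 * q) / (p * s - r * q)).
  split; field; exact Hdet.
Qed.

Lemma sol_basis_of_coef a0 a1 (f1 f2 : R -> C) c1 c2 : entire_coef c1 -> entire_coef c2 ->
  (forall t, (0 <= t)%R -> f1 t = CPSeries c1 (RtoC t)) ->
  (forall t, (0 <= t)%R -> f2 t = CPSeries c2 (RtoC t)) ->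
  (forall n, lhs_coef a0 a1 c1 n = 0) -> (forall n, lhs_coef a0 a1 c2 n = 0) ->
  c1 0%nat * c2 1%nat - c2 0%nat * c1 1%nat <> 0 ->
  sol_basis a a0 a1 f1 f2.
Proof.
  intros He1 He2 Hf1 Hf2 HL1 HL2 Hdet.
  split; [| split; [| split]].
  - exists c1. split; [split; assumption | apply solves_eq_iff_lhs_coef; assumption].
  - exists c2. split; [split; assumption | apply solves_eq_iff_lhs_coef; assumption].
  - intros k1 k2 Hz.
    assert (Hc : forall n, k1 * c1 n + k2 * c2 n = 0).
    { apply CPSeries_coef_eq0; [apply entire_coef_lin; assumption |].
      intros t Ht. rewrite CPSeries_lin, <- Hf1, <- Hf2 by assumption. apply Hz, Ht. }
    exact (det2_independent _ _ _ _ _ _ Hdet (Hc 0%nat) (Hc 1%nat)).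
  - intros x [c [[Hce Hcx] Hs]]. rewrite (solves_eq_iff_lhs_coef _ _ c Hce) in Hs.
    destruct (det2_spanning _ _ _ _ (c 0%nat) (c 1%nat) Hdet) as [k1 [k2 [E0 E1]]].
    exists k1, k2. intros t Ht.
    assert (E : forall n, c n = k1 * c1 n + k2 * c2 n).
    { apply (lhs_coef_eq0_unique a0 a1); auto.
      intro n. rewrite lhs_coef_lin, HL1, HL2. ring. }
    rewrite Hcx, (CPSeries_ext _ _ _ E), CPSeries_lin, Hf1, Hf2 by assumption. reflexivity.
Qed.

Lemma monic_quadratic_coef (a0 a1 l1 l2 : C) :
  (forall z : C, z * z + a1 * z + a0 = (z - l1) * (z - l2)) -> a0 = l1 * l2 /\ a1 = - (l1 + l2).
Proof.
  intros H. pose proof (H 0) as H0. pose proof (H 1) as H1.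
  assert (A0 : a0 = l1 * l2) by (transitivity (0 * 0 + a1 * 0 + a0); [ring | rewrite H0; ring]).
  split; [exact A0 |].
  transitivity ((1 * 1 + a1 * 1 + a0) - 1 - a0); [ring | rewrite H1, A0; ring].
Qed.

Lemma distinct_roots_solution (a0 a1 x0 x01 l1 l2 : C) :
  (forall z : C, z * z + a1 * z + a0 = (z - l1) * (z - l2)) -> l1 <> l2 ->
  let x := fun t : R =>
    (x01 - l2 * x0) / (l1 - l2) * Ealpha a (l1 * RtoC t)
    + (l1 * x0 - x01) / (l1 - l2) * Ealpha a (l2 * RtoC t) in
  solves_ivp a a0 a1 x0 x01 x /\
  (forall y, solves_ivp a a0 a1 x0 x01 y -> forall t, (0 <= t)%R -> y t = x t) /\
  sol_basis a a0 a1 (fun t => Ealpha a (l1 * RtoC t)) (fun t => Ealpha a (l2 * RtoC t)).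
Proof.
  intros Hp Hne x.
  pose proof (Cminus_neq_0 _ _ Hne) as Hd.
  assert (HL : forall l, l = l1 \/ l = l2 -> forall n, lhs_coef a0 a1 (eigen_coef l) n = 0)
    by (intros l Hl n; rewrite lhs_coef_eigen_coef, Hp; destruct Hl; subst; ring).
  pose proof (LD_factor_C_neq0 0) as Hg.
  destruct (solves_ivp_of_coef a0 a1 x0 x01 x
              (fun n => (x01 - l2 * x0) / (l1 - l2) * eigen_coef l1 n
                        + (l1 * x0 - x01) / (l1 - l2) * eigen_coef l2 n)) as [Hivp Huniq].
  - apply entire_coef_lin; apply entire_eigen_coef.
  - intros t _. unfold x. rewrite CPSeries_lin, !Ealpha_scaled by apply entire_eigen_coef.
    reflexivity.
  - intro n. rewrite lhs_coef_lin, !HL by auto. ring.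
  - rewrite !eigen_coef_0. field. exact Hd.
  - rewrite !eigen_coef_1. field. split; assumption.
  - split; [exact Hivp | split; [exact Huniq |]].
    apply (sol_basis_of_coef a0 a1 _ _ (eigen_coef l1) (eigen_coef l2));
      try apply entire_eigen_coef; try (intros t _; apply Ealpha_scaled); try (apply HL; auto).
    rewrite !eigen_coef_0, !eigen_coef_1.
    replace (1 * (l2 / RtoC (LD_factor 0)) - 1 * (l1 / RtoC (LD_factor 0)))
      with ((l2 - l1) / RtoC (LD_factor 0)) by (field; exact Hg).
    apply Cdiv_neq_0, Hg. apply Cminus_neq_0, not_eq_sym, Hne.
Qed.

Lemma double_root_solution (a0 a1 x0 x01 l : C) :
  (forall z : C, z * z + a1 * z + a0 = (z - l) * (z - l)) ->
  let x := fun t : R =>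
    x0 * Ealpha a (l * RtoC t) + (x01 - l * x0) * RtoC t * Ealpha' a (l * RtoC t) in
  solves_ivp a a0 a1 x0 x01 x /\
  (forall y, solves_ivp a a0 a1 x0 x01 y -> forall t, (0 <= t)%R -> y t = x t) /\
  sol_basis a a0 a1 (fun t => Ealpha a (l * RtoC t)) (fun t => RtoC t * Ealpha' a (l * RtoC t)).
Proof.
  intros Hp x.
  destruct (monic_quadratic_coef a0 a1 l l Hp) as [A0 A1].
  assert (He : forall n, lhs_coef a0 a1 (eigen_coef l) n = 0)
    by (intro n; rewrite lhs_coef_eigen_coef, A0, A1; ring).
  assert (Hg : forall n, lhs_coef a0 a1 (gen_eigen_coef l) n = 0)
    by (intro n; rewrite lhs_coef_gen_eigen_coef, A0, A1; ring).
  pose proof (LD_factor_C_neq0 0) as HG.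
  destruct (solves_ivp_of_coef a0 a1 x0 x01 x
              (fun n => x0 * eigen_coef l n + (x01 - l * x0) * gen_eigen_coef l n))
    as [Hivp Huniq].
  - apply entire_coef_lin; [apply entire_eigen_coef | apply entire_gen_eigen_coef].
  - intros t _. unfold x.
    rewrite CPSeries_lin, Ealpha_scaled, <- t_Ealpha'_scaled
      by (apply entire_eigen_coef || apply entire_gen_eigen_coef).
    ring.
  - intro n. rewrite lhs_coef_lin, He, Hg. ring.
  - rewrite eigen_coef_0. simpl. ring.
  - rewrite eigen_coef_1, gen_eigen_coef_1. field. exact HG.
  - split; [exact Hivp | split; [exact Huniq |]].
    apply (sol_basis_of_coef a0 a1 _ _ (eigen_coef l) (gen_eigen_coef l));
      auto using entire_eigen_coef, entire_gen_eigen_coef, Ealpha_scaled, t_Ealpha'_scaled.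
    rewrite eigen_coef_0, gen_eigen_coef_1. simpl.
    replace (1 * / RtoC (LD_factor 0) - 0 * eigen_coef l 1) with (1 / RtoC (LD_factor 0))
      by (field; exact HG).
    apply Cdiv_neq_0; [apply RtoC_neq0, R1_neq_R0 | exact HG].
Qed.

End FractionalOrder.

Open Scope C_scope.

Theorem mainTheorem17 (a : R) (ha : (0 < a < 1)%R) (a0 a1 x0 x01 : C) :
  (forall l1 l2 : C,
     (forall z : C, z * z + a1 * z + a0 = (z - l1) * (z - l2)) ->
     l1 <> l2 ->
     let x := fun t : R =>
       (x01 - l2 * x0) / (l1 - l2) * Ealpha a (l1 * RtoC t)
       + (l1 * x0 - x01) / (l1 - l2) * Ealpha a (l2 * RtoC t) in
     solves_ivp a a0 a1 x0 x01 x /\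
     (forall y, solves_ivp a a0 a1 x0 x01 y -> forall t, (0 <= t)%R -> y t = x t) /\
     sol_basis a a0 a1 (fun t => Ealpha a (l1 * RtoC t)) (fun t => Ealpha a (l2 * RtoC t)))
  /\
  (forall l : C,
     (forall z : C, z * z + a1 * z + a0 = (z - l) * (z - l)) ->
     let x := fun t : R =>
       x0 * Ealpha a (l * RtoC t) + (x01 - l * x0) * RtoC t * Ealpha' a (l * RtoC t) in
     solves_ivp a a0 a1 x0 x01 x /\
     (forall y, solves_ivp a a0 a1 x0 x01 y -> forall t, (0 <= t)%R -> y t = x t) /\
     sol_basis a a0 a1 (fun t => Ealpha a (l * RtoC t))
                       (fun t => RtoC t * Ealpha' a (l * RtoC t))).
Proof.
  split.
  - exact (distinct_roots_solution a ha a0 a1 x0 x01).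
  - exact (double_root_solution a ha a0 a1 x0 x01).
Qed.
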